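(* Let $\Omega_n=\dfrac{\pi^{n/2}}{\Gamma\left(\frac n2+1\right)}$ for $n\in\mathbb{N}$. Define, for $n\in\mathbb{N}$, \[ \mu(n)=\frac{1}{6n^{2}}-\frac{1}{45n^{4}}+\frac{8}{315n^{6}}-\frac{8}{105n^{8}},\qquad \lambda(n)=\mu(n)+\frac{1}{128n^{10}}, \] \[ \alpha(n)=-\frac{n+1}{2n}\ln\frac{n}{2}+\frac12\ln(\pi e)-\frac{\ln 2\pi}{2n}-\lambda(n),\qquad \beta(n)=-\frac{n+1}{2n}\ln\frac{n}{2}+\frac12\ln(\pi e)-\frac{\ln 2\pi}{2n}-\mu(n). \] Then $\alpha(n)-\beta(n+1)>0$ for every $n\in\mathbb{N}$. In consequence, the sequence $\left\{\Omega_n^{1/n}\right\}_{n\ge1}$ decreases monotonically (to $0$).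
   Context: $\Omega_n$ is the volume of the unit ball in $\mathbb{R}^n$; $\Gamma$ is Euler's gamma function. The functions $\alpha,\beta$ satisfy $\alpha(n)<\frac1n\ln\Omega_n<\beta(n)$ for all $n\in\mathbb{N}$ (a previously known result). *)

From Stdlib Require Import Reals.
From Coquelicot Require Import Coquelicot.
Open Scope R_scope.

Definition Gamma (x : R) : R :=
  RInt_gen (fun t => Rpower t (x - 1) * exp (- t)) (at_right 0) (Rbar_locally p_infty).

(* Volume of the unit ball in R^n. *)
Definition Omega (n : nat) : R := Rpower PI (INR n / 2) / Gamma (INR n / 2 + 1).

Definition mu (n : nat) : R :=
  let x := INR n in
  1 / (6 * x ^ 2) - 1 / (45 * x ^ 4) + 8 / (315 * x ^ 6) - 8 / (105 * x ^ 8).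

Definition lambda (n : nat) : R := mu n + 1 / (128 * INR n ^ 10).

Definition alpha (n : nat) : R :=
  let x := INR n in
  - (x + 1) / (2 * x) * ln (x / 2) + 1 / 2 * ln (PI * exp 1)
  - ln (2 * PI) / (2 * x) - lambda n.

Definition beta (n : nat) : R :=
  let x := INR n in
  - (x + 1) / (2 * x) * ln (x / 2) + 1 / 2 * ln (PI * exp 1)
  - ln (2 * PI) / (2 * x) - mu n.

(* Multiplying alpha(n) - beta(n+1) by 2n(n+1) leaves an explicit expression whose positivity
   follows from ln (1 + 1/n) >= 1/(n+1), ln n <= n - 1, ln PI <= 27/20 and crude bounds on the
   rational corrections lambda and mu (the case n = 1 is checked separately).

   Let f(n) = ln Omega_n = (n/2) ln PI - ln Gamma(n/2 + 1). Integrating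
   t^(x-1) e^(-t) (1 - s sqrt t)^2 >= 0 gives Gamma(x + 1/2)^2 < Gamma(x) Gamma(x + 1), so f is
   strictly concave; as f(0) = - ln Gamma(1) >= 0, f(n)/n strictly decreases. Finally
   Gamma(x) >= M^(x-1) e^(-M-1) for every M >= 1 (integrate over [M, M+1]), so
   f(n)/n <= (1/2) ln (PI / M) + (M + 1)/n, and f(n)/n tends to -oo. *)

From Stdlib Require Import Reals Lra Lia.
From Coquelicot Require Import Coquelicot.
Open Scope R_scope.

(** * The inequality between alpha and beta *)

Lemma exp_le (x y : R) : x <= y -> exp x <= exp y.
Proof. intros [h|h]; [left; now apply exp_increasing|subst; apply Rle_refl]. Qed.

Lemma ln_div (x y : R) : 0 < x -> 0 < y -> ln (x / y) = ln x - ln y.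
Proof.
  intros hx hy. unfold Rdiv. rewrite ln_mult, ln_Rinv; [ring|exact hy|exact hx|].
  now apply Rinv_0_lt_compat.
Qed.

Lemma ln_succ_sub_ln_ge (x : R) : 0 < x -> / (x + 1) <= ln (x + 1) - ln x.
Proof.
  intros hx. assert (h := exp_ineq1_le (ln (x / (x + 1)))).
  rewrite exp_ln in h by (apply Rdiv_lt_0_compat; lra).
  rewrite ln_div in h by lra.
  replace (x / (x + 1)) with (1 - / (x + 1)) in h by (field; lra).
  lra.
Qed.

Lemma pow_le_exp (a : R) (n : nat) : 0 <= a -> (1 + a) ^ n <= exp (INR n * a).
Proof.
  intros ha. induction n as [|n IH].
  - simpl. rewrite Rmult_0_l, exp_0. lra.
  - rewrite <- tech_pow_Rmult, S_INR, (Rmult_plus_distr_r (INR n) 1 a), Rmult_1_l, exp_plus.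
    rewrite (Rmult_comm (exp (INR n * a))).
    apply Rmult_le_compat; [lra|apply pow_le; lra|apply exp_ineq1_le|exact IH].
Qed.

Lemma PI_le : PI <= 52 / 15.
Proof.
  destruct (PI_ineq 1) as [_ h]. unfold tg_alt, PI_tg in h. simpl in h. lra.
Qed.

Lemma ln_PI_le : ln PI <= 27 / 20.
Proof.
  rewrite <- (ln_exp (27 / 20)). apply ln_le; [apply PI_RGT_0|].
  replace (27 / 20) with (INR 16 * (27 / 320)) by (simpl; field).
  eapply Rle_trans; [|apply pow_le_exp; lra].
  generalize PI_le. simpl. lra.
Qed.

Definition mu_at (x : R) : R :=
  1 / (6 * x ^ 2) - 1 / (45 * x ^ 4) + 8 / (315 * x ^ 6) - 8 / (105 * x ^ 8).

Definition lambda_at (x : R) : R := mu_at x + 1 / (128 * x ^ 10).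

Lemma lambda_at_scaled_le (x : R) : 2 <= x -> 2 * x * (x + 1) * lambda_at x <= (1 + / x) / 3.
Proof.
  intros hx. set (u := / x).
  assert (hu : 0 < u <= 1 / 2).
  { split; [apply Rinv_0_lt_compat; lra|]. apply Rmult_le_reg_l with x; [lra|].
    unfold u. rewrite Rinv_r; lra. }
  replace (2 * x * (x + 1) * lambda_at x)
    with ((1 + u) / 3
          + 2 * (1 + u) * u ^ 2 * (- 1 / 45 + 8 * u ^ 2 / 315 - 8 * u ^ 4 / 105 + u ^ 6 / 128))
    by (unfold lambda_at, mu_at, u; field; lra).
  assert (hu2 : u ^ 2 <= 1 / 4) by nra.
  assert (hu6 : u ^ 6 <= 1 / 64)
    by (replace (1 / 64) with ((1 / 2) ^ 6) by field; apply pow_incr; lra).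
  assert (0 <= u ^ 4) by (apply pow_le; lra).
  set (Q := - 1 / 45 + 8 * u ^ 2 / 315 - 8 * u ^ 4 / 105 + u ^ 6 / 128).
  assert (Q < 0) by (unfold Q; lra).
  assert (0 <= 2 * (1 + u) * u ^ 2) by nra.
  nra.
Qed.

Lemma mu_at_succ_scaled_ge (x : R) :
  2 <= x -> (1 - / (x + 1)) / 3 - 1 / 200 <= 2 * x * (x + 1) * mu_at (x + 1).
Proof.
  intros hx. set (v := / (x + 1)).
  assert (hv : 0 < v <= 1 / 3).
  { split; [apply Rinv_0_lt_compat; lra|]. apply Rmult_le_reg_l with (x + 1); [lra|].
    unfold v. rewrite Rinv_r; lra. }
  replace (2 * x * (x + 1) * mu_at (x + 1))
    with ((1 - v) / 3 + 2 * (1 - v) * v ^ 2 * (- 1 / 45 + 8 * v ^ 2 / 315 * (1 - 3 * v ^ 2)))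
    by (unfold mu_at, v; field; lra).
  assert (hv2 : v ^ 2 <= 1 / 9) by nra.
  set (Q := - 1 / 45 + 8 * v ^ 2 / 315 * (1 - 3 * v ^ 2)).
  assert (- 1 / 45 <= Q) by (unfold Q; nra).
  assert (0 <= 2 * (1 - v) * v ^ 2 <= 2 / 9) by nra.
  nra.
Qed.

Definition alpha_beta_numerator (x : R) : R :=
  x * (x + 2) * (ln (x + 1) - ln x) - ln x - ln PI
  - 2 * x * (x + 1) * (lambda_at x - mu_at (x + 1)).

Lemma alpha_sub_beta_succ (n : nat) : (1 <= n)%nat ->
  alpha n - beta (S n) = alpha_beta_numerator (INR n) / (2 * INR n * (INR n + 1)).
Proof.
  intros hn. assert (hx : 0 < INR n) by (apply lt_0_INR; lia).
  unfold alpha, beta, lambda.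
  change (mu n) with (mu_at (INR n)). change (mu (S n)) with (mu_at (INR (S n))).
  cbv zeta. rewrite S_INR. set (x := INR n) in *.
  assert (hPI := PI_RGT_0).
  rewrite !ln_div, (ln_mult 2 PI) by lra.
  unfold alpha_beta_numerator, lambda_at. field. lra.
Qed.

Lemma alpha_beta_numerator_1_pos : 0 < alpha_beta_numerator 1.
Proof.
  unfold alpha_beta_numerator, lambda_at, mu_at.
  rewrite ln_1. replace (1 + 1) with 2 by ring.
  (* [3 ln 2 - ln PI = - ln (PI / 8) >= 1 - PI / 8] *)
  assert (h := exp_ineq1_le (ln (PI / 8))).
  rewrite exp_ln, ln_div in h by (generalize PI_RGT_0; lra).
  assert (ln 8 = 3 * ln 2) by (replace 8 with (2 ^ 3) by ring; rewrite ln_pow by lra; simpl; ring).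
  generalize PI_le. intros. lra.
Qed.

Lemma alpha_beta_numerator_pos (x : R) : 2 <= x -> 0 < alpha_beta_numerator x.
Proof.
  intros hx. unfold alpha_beta_numerator.
  assert (hlog : x + 1 - / (x + 1) <= x * (x + 2) * (ln (x + 1) - ln x)).
  { replace (x + 1 - / (x + 1)) with (x * (x + 2) * / (x + 1)) by (field; lra).
    apply Rmult_le_compat_l; [nra|apply ln_succ_sub_ln_ge; lra]. }
  assert (hlnx : ln x <= x - 1) by (generalize (exp_ineq1_le (ln x)); rewrite exp_ln; lra).
  assert (hu : / x <= 1 / 2) by (apply Rmult_le_reg_l with x; [lra|rewrite Rinv_r; lra]).
  assert (hv : / (x + 1) <= 1 / 3)
    by (apply Rmult_le_reg_l with (x + 1); [lra|rewrite Rinv_r; lra]).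
  generalize ln_PI_le (lambda_at_scaled_le x hx) (mu_at_succ_scaled_ge x hx). intros.
  lra.
Qed.

Lemma alpha_sub_beta_succ_pos (n : nat) : (1 <= n)%nat -> alpha n - beta (S n) > 0.
Proof.
  intros hn. rewrite alpha_sub_beta_succ by exact hn.
  assert (hx : 1 <= INR n) by (apply (le_INR 1); exact hn).
  apply Rlt_gt, Rdiv_lt_0_compat; [|nra].
  destruct (Nat.eq_dec n 1) as [->|hn1].
  - exact alpha_beta_numerator_1_pos.
  - apply alpha_beta_numerator_pos. apply (le_INR 2). lia.
Qed.

(** * Improper integrals over (0, +oo) *)

Local Notation zero_to_infty := (filter_prod (at_right 0) (Rbar_locally p_infty)).

Lemma zero_to_infty_near (a0 M : R) :
  0 < a0 -> zero_to_infty (fun ab => 0 < fst ab < a0 /\ M < snd ab).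
Proof.
  intros ha0. apply (Filter_prod _ _ _ (fun a => 0 < a < a0) (fun b => M < b)).
  - exists (mkposreal a0 ha0). intros a ha a_pos. split; [exact a_pos|].
    apply Rabs_lt_between' in ha. simpl in ha. lra.
  - exists M. auto.
  - auto.
Qed.

Lemma is_RInt_exp_half (K a b : R) :
  is_RInt (fun t => K * exp (- t / 2)) a b (2 * K * (exp (- a / 2) - exp (- b / 2))).
Proof.
  replace (2 * K * (exp (- a / 2) - exp (- b / 2)))
    with (minus (- 2 * K * exp (- b / 2)) (- 2 * K * exp (- a / 2)))
    by (unfold minus, plus, opp; simpl; ring).
  apply (is_RInt_derive (V := R_CompleteNormedModule) (fun t => - 2 * K * exp (- t / 2))).
  - intros t _. auto_derive; [easy|unfold Rdiv; field].
  - intros t _. apply (ex_derive_continuous (V := R_NormedModule)). auto_derive. easy.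
Qed.

Section ImproperIntegral.

Variable f : R -> R.
Hypothesis f_cont : forall t, 0 < t -> continuous f t.

Lemma ex_RInt_pos (a b : R) : 0 < a -> 0 < b -> ex_RInt f a b.
Proof.
  intros ha hb. apply (ex_RInt_continuous (V := R_CompleteNormedModule)).
  intros t [ht _]. apply f_cont. apply Rlt_le_trans with (2 := ht). now apply Rmin_glb_lt.
Qed.

Lemma RInt_pos_Chasles (a b c : R) :
  0 < a -> 0 < b -> 0 < c -> RInt f a b + RInt f b c = RInt f a c.
Proof.
  intros ha hb hc.
  exact (RInt_Chasles (V := R_CompleteNormedModule) f a b c
           (ex_RInt_pos a b ha hb) (ex_RInt_pos b c hb hc)).
Qed.

Lemma RInt_pos_swap (a b : R) : 0 < a -> 0 < b -> RInt f b a = - RInt f a b.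
Proof.
  intros ha hb. symmetry.
  exact (opp_RInt_swap (V := R_CompleteNormedModule) f a b (ex_RInt_pos a b ha hb)).
Qed.

Lemma is_RInt_gen_pos_filterlim (l : R) :
  is_RInt_gen f (at_right 0) (Rbar_locally p_infty) l <->
  filterlim (fun ab => RInt f (fst ab) (snd ab)) zero_to_infty (locally l).
Proof.
  assert (hpos := zero_to_infty_near 1 0 Rlt_0_1).
  split.
  - intros hf P hP. unfold filtermap.
    eapply filter_imp; [| exact (hf P hP)].
    intros ab [I [hI hPI]]. now rewrite (is_RInt_unique _ _ _ _ hI).
  - intros hf P hP. unfold filtermapi.
    assert (hfP : zero_to_infty (fun ab => P (RInt f (fst ab) (snd ab)))) by exact (hf P hP).
    eapply filter_imp; [|exact (filter_and _ _ hfP hpos)].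
    intros [a b] [hPab [[ha _] hb]]. exists (RInt f a b). split; [|exact hPab].
    exact (RInt_correct (V := R_CompleteNormedModule) f a b (ex_RInt_pos a b ha hb)).
Qed.

Section Dominated.

Variable K : R.
Hypothesis f_dom : forall t, 0 < t -> Rabs (f t) <= K * exp (- t / 2).

Lemma dominating_const_nonneg : 0 <= K.
Proof.
  apply Rmult_le_reg_r with (exp (- 1 / 2)); [apply exp_pos|].
  rewrite Rmult_0_l. eapply Rle_trans; [apply Rabs_pos|exact (f_dom 1 Rlt_0_1)].
Qed.

Lemma Rabs_RInt_le_near_0 (a b : R) :
  0 < a -> 0 < b -> Rabs (RInt f a b) <= K * Rabs (b - a).
Proof.
  assert (hK := dominating_const_nonneg).
  assert (ordered : forall a b, 0 < a -> a <= b -> Rabs (RInt f a b) <= K * Rabs (b - a)).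
  { intros a' b' ha hab. rewrite (Rabs_pos_eq (b' - a')), Rmult_comm by lra.
    apply (abs_RInt_le_const f a' b' K hab (ex_RInt_pos a' b' ha ltac:(lra))).
    intros t [ht _]. eapply Rle_trans; [apply f_dom; lra|].
    assert (exp (- t / 2) <= 1) by (rewrite <- exp_0; apply exp_le; lra). nra. }
  intros ha hb. destruct (Rle_or_lt a b) as [hab|hba]; [now apply ordered|].
  rewrite <- Rabs_Ropp, <- RInt_pos_swap, Rabs_minus_sym by assumption.
  apply ordered; lra.
Qed.

Lemma Rabs_RInt_le_tail (M a b : R) :
  0 < M -> M <= a -> M <= b -> Rabs (RInt f a b) <= 2 * K * exp (- M / 2).
Proof.
  intros hM ha hb. assert (hK := dominating_const_nonneg).
  assert (ordered : forall a b, M <= a <= b -> Rabs (RInt f a b) <= 2 * K * exp (- M / 2)).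
  { intros a' b' [ha' hab].
    eapply Rle_trans.
    - apply (norm_RInt_le (V := R_NormedModule) f (fun t => K * exp (- t / 2)) a' b' _ _ hab).
      + intros t [ht _]. apply f_dom. lra.
      + apply (RInt_correct (V := R_CompleteNormedModule)), ex_RInt_pos; lra.
      + apply is_RInt_exp_half.
    - assert (exp (- a' / 2) <= exp (- M / 2)) by (apply exp_le; lra).
      assert (0 < exp (- b' / 2)) by apply exp_pos. nra. }
  destruct (Rle_or_lt a b) as [hab|hba]; [now apply ordered|].
  rewrite <- Rabs_Ropp, <- RInt_pos_swap by lra. apply ordered; lra.
Qed.

Lemma Rabs_RInt_sub_le (d M a b a' b' : R) :
  0 < M -> 0 < a < d -> 0 < a' < d -> M <= b -> M <= b' ->
  Rabs (RInt f a' b' - RInt f a b) <= K * d + 2 * K * exp (- M / 2).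
Proof.
  intros hM [ha had] [ha' had'] hb hb'. assert (hK := dominating_const_nonneg).
  rewrite <- (RInt_pos_Chasles a' a b'), <- (RInt_pos_Chasles a b b') by lra.
  replace (RInt f a' a + (RInt f a b + RInt f b b') - RInt f a b)
    with (RInt f a' a + RInt f b b') by ring.
  eapply Rle_trans; [apply Rabs_triang|]. apply Rplus_le_compat.
  - eapply Rle_trans; [apply Rabs_RInt_le_near_0; lra|].
    apply Rmult_le_compat_l; [lra|]. apply Rabs_le_between'. lra.
  - now apply Rabs_RInt_le_tail.
Qed.

Lemma ex_RInt_gen_dominated : ex_RInt_gen f (at_right 0) (Rbar_locally p_infty).
Proof.
  assert (hK := dominating_const_nonneg).
  assert (cauchy : exists l,
    filterlim (fun ab => RInt f (fst ab) (snd ab)) zero_to_infty (locally l)).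
  { apply (filterlim_locally_cauchy (U := R_CompleteNormedModule)).
    intros [eps heps]. set (d := eps / (2 * (K + 1))). set (M := 8 * (K + 1) / eps).
    assert (hd : 0 < d) by (unfold d; apply Rdiv_lt_0_compat; lra).
    assert (hM : 0 < M) by (unfold M; apply Rdiv_lt_0_compat; lra).
    exists (fun ab => 0 < fst ab < d /\ M < snd ab). split; [now apply zero_to_infty_near|].
    intros [a b] [a' b'] [ha hb] [ha' hb']. simpl in *.
    change (Rabs (RInt f a' b' - RInt f a b) < eps).
    eapply Rle_lt_trans; [apply (Rabs_RInt_sub_le d M); lra|].
    assert (hKd : K * d < eps / 2).
    { unfold d. apply Rmult_lt_reg_r with (2 * (K + 1)); [lra|]. field_simplify; lra. }
    assert (hE : eps + 4 * (K + 1) <= eps * exp (M / 2)).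
    { assert (h := exp_ineq1_le (M / 2)).
      assert (eps * (1 + M / 2) = eps + 4 * (K + 1)) by (unfold M; field; lra).
      nra. }
    assert (he : exp (- M / 2) * exp (M / 2) = 1).
    { rewrite <- exp_plus. replace (- M / 2 + M / 2) with 0 by field. apply exp_0. }
    assert (0 < exp (- M / 2)) by apply exp_pos.
    nra. }
  destruct cauchy as [l hl]. exists l. now apply is_RInt_gen_pos_filterlim.
Qed.

End Dominated.

Lemma RInt_le_is_RInt_gen (L a b : R) :
  (forall t, 0 < t -> 0 <= f t) ->
  is_RInt_gen f (at_right 0) (Rbar_locally p_infty) L -> 0 < a <= b -> RInt f a b <= L.
Proof.
  intros f_nonneg hL [ha hab]. apply is_RInt_gen_pos_filterlim in hL.
  refine (filterlim_le (F := zero_to_infty) (fun _ => RInt f a b) _ (RInt f a b) L _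
    (filterlim_const _) hL).
  eapply filter_imp; [|exact (zero_to_infty_near a b ha)].
  intros [a' b'] [[ha' ha'a] hb']. simpl in *.
  rewrite <- (RInt_pos_Chasles a' a b'), <- (RInt_pos_Chasles a b b') by lra.
  assert (0 <= RInt f a' a).
  { apply RInt_ge_0; [lra|apply ex_RInt_pos; lra|intros t ht; apply f_nonneg; lra]. }
  assert (0 <= RInt f b b').
  { apply RInt_ge_0; [lra|apply ex_RInt_pos; lra|intros t ht; apply f_nonneg; lra]. }
  lra.
Qed.

End ImproperIntegral.

(** * The Gamma function *)

Definition gamma_integrand (x t : R) : R := Rpower t (x - 1) * exp (- t).

Lemma gamma_integrand_pos (x t : R) : 0 < gamma_integrand x t.
Proof. apply Rmult_lt_0_compat; apply exp_pos. Qed.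

Lemma gamma_integrand_continuous (x t : R) : 0 < t -> continuous (gamma_integrand x) t.
Proof.
  intros ht. apply (ex_derive_continuous (V := R_NormedModule)).
  unfold gamma_integrand, Rpower. auto_derive. exact ht.
Qed.

Lemma gamma_integrand_le_exp_half (x : R) :
  1 <= x -> exists K, forall t, 0 < t -> Rabs (gamma_integrand x t) <= K * exp (- t / 2).
Proof.
  intros hx. set (c := x - 1). set (j := 2 * c + 1).
  assert (hj : 0 < j) by (unfold j, c; lra).
  exists (exp (c * (ln j - 1))). intros t ht.
  rewrite Rabs_pos_eq by (left; apply gamma_integrand_pos).
  unfold gamma_integrand, Rpower. fold c. rewrite <- !exp_plus. apply exp_le.
  (* [ln (t / j) <= t / j - 1] gives [c ln t <= c (ln j - 1) + c t / j], and [c / j <= 1 / 2]. *)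
  assert (hlog := exp_ineq1_le (ln (t / j))).
  rewrite exp_ln in hlog by (apply Rdiv_lt_0_compat; lra).
  unfold Rdiv in hlog. rewrite ln_mult, ln_Rinv in hlog by (try apply Rinv_0_lt_compat; lra).
  assert (hcj : c * / j <= / 2).
  { apply Rmult_le_reg_r with j; [lra|]. rewrite Rmult_assoc, Rinv_l by lra. unfold j; lra. }
  assert (hc : 0 <= c) by (unfold c; lra).
  assert (c * ln t <= c * (ln j - 1) + c * / j * t).
  { replace (c * / j * t) with (c * (t * / j)) by ring. rewrite <- Rmult_plus_distr_l.
    apply Rmult_le_compat_l; lra. }
  assert (c * / j * t <= t / 2) by nra.
  lra.
Qed.

Lemma is_RInt_gen_Gamma (x : R) :
  1 <= x -> is_RInt_gen (gamma_integrand x) (at_right 0) (Rbar_locally p_infty) (Gamma x).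
Proof.
  intros hx. destruct (gamma_integrand_le_exp_half x hx) as [K hK].
  apply (RInt_gen_correct (V := R_CompleteNormedModule)).
  exact (ex_RInt_gen_dominated _ (gamma_integrand_continuous x) K hK).
Qed.

Lemma RInt_le_Gamma (x a b : R) : 1 <= x -> 0 < a <= b -> RInt (gamma_integrand x) a b <= Gamma x.
Proof.
  intros hx hab. apply RInt_le_is_RInt_gen; [apply gamma_integrand_continuous| | |exact hab].
  - intros t _. left. apply gamma_integrand_pos.
  - now apply is_RInt_gen_Gamma.
Qed.

Lemma Gamma_pos (x : R) : 1 <= x -> 0 < Gamma x.
Proof.
  intros hx. apply Rlt_le_trans with (RInt (gamma_integrand x) 1 2); [|apply RInt_le_Gamma; lra].
  apply RInt_gt_0; [lra|intros; apply gamma_integrand_pos|].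
  intros t ht. apply gamma_integrand_continuous. lra.
Qed.

Lemma Gamma_1_le : Gamma 1 <= 1.
Proof.
  assert (hL := is_RInt_gen_Gamma 1 (Rle_refl 1)).
  apply is_RInt_gen_pos_filterlim in hL; [|apply gamma_integrand_continuous].
  refine (filterlim_le (F := zero_to_infty) _ (fun _ => 1) (Gamma 1) 1 _ hL (filterlim_const _)).
  eapply filter_imp; [|exact (zero_to_infty_near 1 0 Rlt_0_1)].
  intros [a b] [[ha _] hb]. simpl in *.
  assert (hI : is_RInt (gamma_integrand 1) a b (minus (- exp (- b)) (- exp (- a)))).
  { apply (is_RInt_derive (V := R_CompleteNormedModule) (fun t => - exp (- t))).
    - intros t _. auto_derive; [easy|].
      unfold gamma_integrand, Rpower. rewrite Rminus_diag, Rmult_0_l, exp_0. ring.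
    - intros t ht. apply gamma_integrand_continuous.
      apply Rlt_le_trans with (2 := proj1 ht). now apply Rmin_glb_lt. }
  rewrite (is_RInt_unique _ _ _ _ hI). unfold minus, plus, opp. simpl.
  assert (exp (- a) <= 1) by (rewrite <- exp_0; apply exp_le; lra).
  assert (0 < exp (- b)) by apply exp_pos.
  lra.
Qed.

Lemma Gamma_ge (x M : R) : 1 <= x -> 1 <= M -> Rpower M (x - 1) * exp (- (M + 1)) <= Gamma x.
Proof.
  intros hx hM.
  apply Rle_trans with (RInt (gamma_integrand x) M (M + 1)); [|apply RInt_le_Gamma; lra].
  replace (Rpower M (x - 1) * exp (- (M + 1)))
    with (RInt (fun _ => Rpower M (x - 1) * exp (- (M + 1))) M (M + 1))
    by (rewrite RInt_const; unfold scal; simpl; unfold mult; simpl; ring).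
  apply RInt_le; [lra|apply ex_RInt_const| |].
  { apply ex_RInt_pos; [apply gamma_integrand_continuous|lra|lra]. }
  intros t ht. unfold gamma_integrand. apply Rmult_le_compat.
  - left. apply exp_pos.
  - left. apply exp_pos.
  - apply Rle_Rpower_l; lra.
  - apply exp_le. lra.
Qed.

Lemma gamma_integrand_sq_combination (x s t : R) : 0 < t ->
  gamma_integrand x t - 2 * s * gamma_integrand (x + 1 / 2) t + s ^ 2 * gamma_integrand (x + 1) t
  = gamma_integrand x t * (1 - s * sqrt t) ^ 2.
Proof.
  intros ht. unfold gamma_integrand.
  replace (x + 1 / 2 - 1) with (x - 1 + / 2) by field.
  replace (x + 1 - 1) with (x - 1 + 1) by ring.
  rewrite !Rpower_plus, Rpower_sqrt, Rpower_1 by exact ht.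
  replace (Rpower t (x - 1) * t) with (Rpower t (x - 1) * (sqrt t * sqrt t))
    by (rewrite sqrt_sqrt; lra).
  ring.
Qed.

(* Cauchy-Schwarz in disguise: with [s = Gamma (x + 1/2) / Gamma (x + 1)], the integral of
   [gamma_integrand x t * (1 - s sqrt t)^2] equals [Gamma x - Gamma (x + 1/2)^2 / Gamma (x + 1)]. *)
Lemma Gamma_half_sq_lt (x : R) : 1 <= x -> Gamma (x + 1 / 2) ^ 2 < Gamma x * Gamma (x + 1).
Proof.
  intros hx.
  assert (iA := is_RInt_gen_Gamma x hx).
  assert (iB := is_RInt_gen_Gamma (x + 1 / 2) ltac:(lra)).
  assert (iC := is_RInt_gen_Gamma (x + 1) ltac:(lra)).
  assert (hB := Gamma_pos (x + 1 / 2) ltac:(lra)). assert (hC := Gamma_pos (x + 1) ltac:(lra)).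
  set (A := Gamma x) in *. set (B := Gamma (x + 1 / 2)) in *. set (C := Gamma (x + 1)) in *.
  set (s := B / C). assert (hs : 0 < s) by (apply Rdiv_lt_0_compat; assumption).
  set (psi := fun t => gamma_integrand x t * (1 - s * sqrt t) ^ 2).
  assert (psi_cont : forall t, 0 < t -> continuous psi t).
  { intros t ht. apply (ex_derive_continuous (V := R_NormedModule)).
    unfold psi, gamma_integrand, Rpower. auto_derive. auto. }
  assert (psi_int :
    is_RInt_gen psi (at_right 0) (Rbar_locally p_infty) (A - 2 * s * B + s ^ 2 * C)).
  { assert (h := is_RInt_gen_plus _ _ _ _
      (is_RInt_gen_minus _ _ _ _ iA (is_RInt_gen_scal _ (2 * s) _ iB))
      (is_RInt_gen_scal _ (s ^ 2) _ iC)).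
    eapply is_RInt_gen_ext; [|exact h].
    eapply filter_imp; [|exact (zero_to_infty_near 1 0 Rlt_0_1)].
    intros [a b] [[ha _] hb] t ht. simpl in *.
    apply (gamma_integrand_sq_combination x s t).
    apply Rlt_trans with (2 := proj1 ht). now apply Rmin_glb_lt. }
  set (p := / (4 * s ^ 2)). set (q := / (2 * s ^ 2)).
  assert (hs2 : 0 < s ^ 2) by (apply pow_lt; exact hs).
  assert (hp : 0 < p) by (apply Rinv_0_lt_compat; lra).
  assert (hpq : p < q) by (apply Rinv_lt_contravar; nra).
  assert (psi_pos : 0 < RInt psi p q).
  { apply RInt_gt_0; [exact hpq| |intros t ht; apply psi_cont; lra].
    intros t [hpt htq]. apply Rmult_lt_0_compat; [apply gamma_integrand_pos|apply pow_lt].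
    assert (hsq : sqrt t * sqrt t = t) by (apply sqrt_sqrt; lra).
    assert (s ^ 2 * q = / 2) by (unfold q; field; lra).
    assert (0 <= sqrt t) by apply sqrt_pos.
    nra. }
  assert (psi_le : RInt psi p q <= A - 2 * s * B + s ^ 2 * C).
  { apply RInt_le_is_RInt_gen; [exact psi_cont| |exact psi_int|lra].
    intros t _. apply Rmult_le_pos; [left; apply gamma_integrand_pos|apply pow2_ge_0]. }
  assert (hsC : s * C = B) by (unfold s; field; lra).
  replace (A - 2 * s * B + s ^ 2 * C) with (A - s * B) in psi_le by (rewrite <- hsC; ring).
  replace B with (s * C) at 1 by exact hsC. nra.
Qed.

(** * Volumes of unit balls *)

Lemma concave_seq_div_decreasing (f : nat -> R) :
  (forall n, f n + f (S (S n)) < 2 * f (S n)) -> 0 <= f O ->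
  forall n, (1 <= n)%nat -> / INR (S n) * f (S n) < / INR n * f n.
Proof.
  intros f_concave f0 n hn.
  assert (cross : forall n, (1 <= n)%nat -> INR n * f (S n) < INR (S n) * f n).
  { intros m hm. induction m as [|m IH]; [lia|].
    assert (hc := f_concave m). rewrite !S_INR in *.
    assert (0 <= INR m) by apply pos_INR.
    destruct m as [|m].
    - simpl in *. lra.
    - specialize (IH ltac:(lia)). rewrite S_INR in *. nra. }
  assert (hn0 : 0 < INR n) by (apply lt_0_INR; lia).
  specialize (cross n hn). rewrite S_INR in *.
  apply Rmult_lt_reg_l with (INR n * (INR n + 1)); [nra|].
  replace (INR n * (INR n + 1) * (/ (INR n + 1) * f (S n))) with (INR n * f (S n)) by (field; lra).
  replace (INR n * (INR n + 1) * (/ INR n * f n)) with ((INR n + 1) * f n) by (field; lra).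
  exact cross.
Qed.

Lemma ln_Omega (n : nat) : ln (Omega n) = INR n / 2 * ln PI - ln (Gamma (INR n / 2 + 1)).
Proof.
  assert (0 <= INR n) by apply pos_INR.
  assert (hG : 0 < Gamma (INR n / 2 + 1)) by (apply Gamma_pos; lra).
  unfold Omega, Rdiv at 1.
  rewrite ln_mult, ln_Rinv, ln_Rpower
    by (try apply Rinv_0_lt_compat; try apply exp_pos; assumption).
  ring.
Qed.

Lemma ln_Omega_concave (n : nat) : ln (Omega n) + ln (Omega (S (S n))) < 2 * ln (Omega (S n)).
Proof.
  rewrite !ln_Omega, !S_INR.
  set (x := INR n / 2 + 1).
  assert (hx : 1 <= x) by (unfold x; assert (0 <= INR n) by apply pos_INR; lra).
  replace ((INR n + 1) / 2 + 1) with (x + 1 / 2) by (unfold x; field).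
  replace ((INR n + 1 + 1) / 2 + 1) with (x + 1) by (unfold x; field).
  assert (h := Gamma_half_sq_lt x hx).
  apply ln_increasing in h; [|apply pow_lt, Gamma_pos; lra].
  rewrite ln_pow, ln_mult in h by (apply Gamma_pos; lra). simpl INR in h.
  lra.
Qed.

Lemma ln_Omega_0_nonneg : 0 <= ln (Omega 0).
Proof.
  rewrite ln_Omega. simpl INR. replace (0 / 2 + 1) with 1 by field.
  assert (ln (Gamma 1) <= 0)
    by (rewrite <- ln_1; apply ln_le; [apply Gamma_pos; lra|apply Gamma_1_le]).
  lra.
Qed.

Lemma ln_Omega_le (n : nat) (M : R) : 1 <= M -> ln (Omega n) <= INR n / 2 * ln (PI / M) + M + 1.
Proof.
  intros hM. assert (0 <= INR n) by apply pos_INR.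
  assert (hG := Gamma_ge (INR n / 2 + 1) M ltac:(lra) hM).
  replace (INR n / 2 + 1 - 1) with (INR n / 2) in hG by ring.
  apply ln_le in hG; [|apply Rmult_lt_0_compat; apply exp_pos].
  rewrite ln_mult, ln_Rpower, ln_exp in hG by (apply exp_pos || lra).
  rewrite ln_Omega, ln_div by (apply PI_RGT_0 || lra).
  lra.
Qed.

Lemma is_lim_seq_ln_Omega_div : is_lim_seq (fun n => / INR n * ln (Omega n)) m_infty.
Proof.
  apply is_lim_seq_spec. intros A.
  set (M := PI * exp (2 * (Rabs A + 1))).
  assert (hPI : 3 < PI) by (generalize PI2_3_2; lra).
  assert (hA : - A <= Rabs A) by (rewrite <- Rabs_Ropp; apply Rle_abs).
  assert (0 <= Rabs A) by apply Rabs_pos.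
  assert (hM : 1 <= M).
  { assert (1 <= exp (2 * (Rabs A + 1))).
    { apply Rle_trans with (1 + 2 * (Rabs A + 1)); [lra|apply exp_ineq1_le]. }
    unfold M. nra. }
  assert (hlnM : ln (PI / M) = - (2 * (Rabs A + 1))).
  { assert (0 < exp (2 * (Rabs A + 1))) by apply exp_pos.
    unfold M. rewrite ln_div, ln_mult, ln_exp by (lra || nra). ring. }
  destruct (INR_unbounded (M + 1)) as [N hN].
  exists N. intros n hn.
  assert (hnN : INR N <= INR n) by (apply le_INR; lia).
  assert (hn0 : 0 < INR n) by lra.
  assert (h := ln_Omega_le n M hM). rewrite hlnM in h.
  apply Rmult_lt_reg_l with (INR n); [exact hn0|].
  rewrite <- Rmult_assoc, Rinv_r, Rmult_1_l by lra.
  assert (0 <= INR n * (A + Rabs A)) by (apply Rmult_le_pos; lra).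
  lra.
Qed.

Theorem theorem2 :
  (forall n : nat, (1 <= n)%nat -> alpha n - beta (S n) > 0) /\
  (forall n : nat, (1 <= n)%nat ->
     Rpower (Omega (S n)) (/ INR (S n)) < Rpower (Omega n) (/ INR n)) /\
  is_lim_seq (fun n : nat => Rpower (Omega n) (/ INR n)) 0.
Proof.
  split; [exact alpha_sub_beta_succ_pos|]. split.
  - intros n hn. apply exp_increasing.
    exact (concave_seq_div_decreasing (fun n => ln (Omega n))
             ln_Omega_concave ln_Omega_0_nonneg n hn).
  - exact (filterlim_comp _ _ _ _ exp _ _ _ is_lim_seq_ln_Omega_div is_lim_exp_m).
Qed.
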